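(* Let $\mathcal X$ be finite, $\hat P_0,\hat P_1$ distributions on $\mathcal X$ with full support, and for $\hat\gamma$ with $-D(\hat P_0\|\hat P_1)\le\hat\gamma\le D(\hat P_1\|\hat P_0)$ let $\hat Q_\lambda(x)=\hat P_0^{1-\lambda}(x)\hat P_1^{\lambda}(x)/\sum_a\hat P_0^{1-\lambda}(a)\hat P_1^{\lambda}(a)$ with $\lambda\in[0,1]$ solving $D(\hat Q_\lambda\|\hat P_0)-D(\hat Q_\lambda\|\hat P_1)=\hat\gamma$. Define, for $i\in\{0,1\}$ and a constant $\alpha>0$, $$\theta_i(\hat P_0,\hat P_1,\hat\gamma)=\frac2\alpha\mathrm{Var}_{\hat P_i}\Big(\frac{\hat Q_\lambda(X)}{\hat P_i(X)}\Big).$$ Then for every such $\hat\gamma$, $$\frac{\partial}{\partial\hat\gamma}\theta_0(\hat P_0,\hat P_1,\hat\gamma)\ge0,\qquad \frac{\partial}{\partial\hat\gamma}\theta_1(\hat P_0,\hat P_1,\hat\gamma)\le0.$$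
   Context: $D$ denotes relative entropy. $\theta_i$ is the sensitivity of the worst-case error exponent of the mismatched likelihood ratio test (with test distributions $\hat P_0,\hat P_1$ and threshold $\hat\gamma$) to a divergence-ball mismatch of order/curvature $\alpha$. *)

From mathcomp Require Import all_boot all_order all_algebra.
From mathcomp Require Import all_classical all_reals all_analysis.
Import Order.TTheory GRing.Theory Num.Theory numFieldNormedType.Exports.
Local Open Scope ring_scope.
Local Open Scope classical_set_scope.

Section Defs.
Context {R : realType} {T : finType}.

Definition is_fulldist (P : T -> R) : Prop :=
  (forall x, 0 < P x) /\ \sum_(x : T) P x = 1.

Definition KL (P Q : T -> R) : R := \sum_(x : T) P x * ln (P x / Q x).

Definition tilted (P0 P1 : T -> R) (l : R) : T -> R :=
  fun x => P0 x `^ (1 - l) * P1 x `^ l /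
           \sum_(a : T) P0 a `^ (1 - l) * P1 a `^ l.

Definition lambda_of (P0 P1 : T -> R) (g : R) : R :=
  xget 0 [set l : R | 0 <= l <= 1 /\
                      KL (tilted P0 P1 l) P0 - KL (tilted P0 P1 l) P1 = g].

Definition variance (P f : T -> R) : R :=
  \sum_(x : T) P x * (f x - \sum_(y : T) P y * f y) ^+ 2.

(* theta_i(P0,P1,g); i = false is index 0, i = true is index 1 *)
Definition theta (alpha : R) (P0 P1 : T -> R) (i : bool) (g : R) : R :=
  let Q := tilted P0 P1 (lambda_of P0 P1 g) in
  let Pi := if i then P1 else P0 in
  2 / alpha * variance Pi (fun x => Q x / Pi x).

End Defs.

(* d is the derivative of f at x, taken within the set A
   (one-sided at the endpoints of an interval A) *)
Definition deriv_within {R : realType} (f : R -> R) (A : set R) (x d : R) : Prop :=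
  (fun h : R => h^-1 * (f (x + h) - f x)) @ within (fun h : R => A (x + h)) ((0 : R)^')
  --> d.

From Pilot Require Import Defs.
From mathcomp Require Import all_boot all_order all_algebra.
From mathcomp Require Import all_classical all_reals all_analysis.
From mathcomp Require Import ring lra.
Import Order.TTheory GRing.Theory Num.Theory numFieldNormedType.Exports.
Local Open Scope ring_scope.
Local Open Scope classical_set_scope.

(* The tilted law Q_t = P0 exp(t llr) / Z(t), with llr = ln (P1 / P0), is an
   exponential family, and D(Q_t || P0) - D(Q_t || P1) is the mean of llr under
   Q_t, i.e. (ln Z)'(t), whose derivative is the variance of llr under Q_t.
   Unless P0 = P1 (when the admissible range of gamma is the point 0), this mean
   is strictly increasing, and lambda is its inverse on that range.
   For c = 0 (resp. c = 1), Var_{P_c}(Q_t / P_c) = Z(2t - c) / Z(t)^2 - 1, whose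
   t-derivative is a positive multiple of mean(2t - c) - mean(t); it thus has the
   sign of t - c, which is >= 0 (resp. <= 0) on [0, 1].  Differentiating through
   the inverse lambda only multiplies by the positive factor 1 / Var_{Q_t}(llr). *)

Section DerivativeWithin.
Context {R : realType}.

Lemma near_within_dnbhs0 (D P : set R) :
  (\forall h \near 0, h != 0 -> D h -> P h) -> within D 0^' P.
Proof. by []. Qed.

Lemma deriv_within_isolated (f : R -> R) (A : set R) (g d : R) :
  (forall h, A (g + h) -> h = 0) -> deriv_within f A g d.
Proof.
move=> A_g P _; apply: near_within_dnbhs0; apply: filterE => h h_neq0 /A_g h0.
by rewrite h0 eqxx in h_neq0.
Qed.

Context {phi psi : R -> R} {A : set R} {g : R}.
Hypotheses (phi_incr : {homo phi : x y / x < y})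
  (psiK : forall y, A y -> phi (psi y) = y) (Ag : A g).

Let F := within (fun h => A (g + h)) 0^'.

Lemma psi_shift_neq h : h != 0 -> A (g + h) -> psi (g + h) != psi g.
Proof.
move=> h_neq0 Agh; apply: contra h_neq0 => /eqP psi_eq.
by have := psiK _ Agh; rewrite psi_eq psiK // => /eqP; rewrite eq_sym addrC -subr_eq0 addrK.
Qed.

Lemma cvg_psi_shift : (fun h => psi (g + h)) @ F --> psi g.
Proof.
have phi_lt : {mono phi : x y / x < y} by exact/leW_mono/le_mono.
apply/cvgrPdist_lt => e e_gt0; set l0 := psi g.
have phi_l0 : phi l0 = g by exact: psiK.
have up : g < phi (l0 + e) by rewrite -phi_l0 phi_lt ltrDl.
have down : phi (l0 - e) < g by rewrite -phi_l0 phi_lt gtrDl oppr_lt0.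
have delta_gt0 : 0 < Num.min (phi (l0 + e) - g) (g - phi (l0 - e)).
  by rewrite lt_min !subr_gt0 up down.
apply: near_within_dnbhs0; apply: filterS (nbhs0_lt delta_gt0) => h.
rewrite lt_min !ltr_norml => /andP[/andP[_ h_up] /andP[h_down _]] _ Agh.
have lt_up : psi (g + h) < l0 + e by rewrite -phi_lt psiK //; lra.
have gt_down : l0 - e < psi (g + h) by rewrite -phi_lt psiK //; lra.
by apply/andP; split; lra.
Qed.

Lemma deriv_within_comp_inverse {f : R -> R} {df dphi : R} :
  is_derive (psi g) 1 f df -> is_derive (psi g) 1 phi dphi -> dphi != 0 ->
  deriv_within (f \o psi) A g (df / dphi).
Proof.
move=> [f_der <-] [phi_der <-] dphi_neq0.
set l0 := psi g; pose k h := psi (g + h) - l0.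
have k_neq0 : \forall h \near F, k h != 0.
  by apply: near_within_dnbhs0; apply: filterE => h; rewrite subr_eq0; exact: psi_shift_neq.
have k_dnbhs : k @ F --> 0^'.
  have k_cvg : k @ F --> 0 by rewrite -(subrr l0); exact: cvgB cvg_psi_shift (cvg_cst _).
  move=> P /k_cvg k_P; have {}k_P : F (fun h => k h != 0 -> P (k h)) := k_P.
  by apply: filterS2 k_neq0 k_P => h kh_neq0; exact.
have f_quot := cvg_comp _ _ k_dnbhs f_der.
have phi_quot := cvg_comp _ _ k_dnbhs phi_der.
apply: cvg_trans (cvgM f_quot (cvgV dphi_neq0 phi_quot)).
apply: near_eq_cvg; near=> h.
have kh_neq0 : k h != 0 by near: h.
have [h_neq0 Agh] : h != 0 /\ A (g + h).
  by near: h; apply: near_within_dnbhs0; exact: filterE.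
rewrite /= scaler1 /k subrK !psiK // /GRing.scale /= addrAC subrr add0r.
by field; apply/andP.
Unshelve. all: by end_near. Qed.

End DerivativeWithin.

Section FiniteDistributions.
Context {R : realType} {T : finType}.
Implicit Types (P f : T -> R).

Lemma card_gt0_of_sum1 {P} : \sum_x P x = 1 -> (0 < #|T|)%N.
Proof.
move=> P_sum1; rewrite lt0n; apply: contra_eq_neq P_sum1 => /card0_eq T_empty.
by rewrite big_pred0 // eq_sym oner_eq0.
Qed.

Lemma KL_self P : (forall x, 0 < P x) -> KL P P = 0.
Proof. by move=> P_gt0; rewrite /KL big1 // => x _; rewrite divff ?gt_eqF // ln1 mulr0. Qed.


Lemma variance_ge0 P f : (forall x, 0 <= P x) -> 0 <= Defs.variance P f.
Proof. by move=> P_ge0; apply: sumr_ge0 => x _; rewrite mulr_ge0 ?sqr_ge0. Qed.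

Lemma variance_gt0 P f x y : (forall z, 0 < P z) -> f x != f y ->
  0 < Defs.variance P f.
Proof.
move=> P_gt0 fxy; set m := \sum_z P z * f z.
rewrite lt_def variance_ge0 ?andbT; last by move=> z; exact/ltW.
apply: contra fxy => /eqP/psumr_eq0P.
move=> /(_ (fun z _ => mulr_ge0 (ltW (P_gt0 z)) (sqr_ge0 _))) terms0.
have fE z : f z = m.
  apply/eqP; rewrite -subr_eq0 -sqrf_eq0.
  by have /eqP := terms0 z isT; rewrite mulf_eq0 gt_eqF.
by rewrite !fE.
Qed.

End FiniteDistributions.

Lemma is_derive_sumr {R : numFieldType} {V W : normedModType R} (I : Type)
    (r : seq I) (F : I -> V -> W) (dF : I -> W) (x v : V) :
  (forall i, is_derive x v (F i) (dF i)) ->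
  is_derive x v (fun y => \sum_(i <- r) F i y) (\sum_(i <- r) dF i).
Proof.
move=> dF_F; rewrite -fct_sumE.
by elim/big_ind2 : _ => // [|f df g dg *]; [exact: is_derive_cst | exact: is_deriveD].
Qed.

Section ExponentialFamily.
Context {R : realType} {T : finType}.
Variables (a b : T -> R).
Hypothesis T_inhabited : (0 < #|T|)%N.

Definition expw (x : T) (t : R) : R := expR (a x + t * b x).
Definition partition_fn (t : R) : R := \sum_x expw x t.
Definition moment1 (t : R) : R := \sum_x b x * expw x t.
Definition moment2 (t : R) : R := \sum_x b x ^+ 2 * expw x t.
Definition tilt (t : R) (x : T) : R := expw x t / partition_fn t.
Definition mean (t : R) : R := moment1 t / partition_fn t.
Definition chi2 (c t : R) : R := partition_fn (2 * t - c) / partition_fn t ^+ 2 - 1.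

Lemma expw_gt0 x t : 0 < expw x t.
Proof. exact: expR_gt0. Qed.

Lemma expw_neq0 x t : expw x t != 0.
Proof. exact/lt0r_neq0/expw_gt0. Qed.

Lemma partition_fn_gt0 t : 0 < partition_fn t.
Proof.
have [x _] := card_gt0P T_inhabited.
rewrite /partition_fn (bigD1 x) //= ltr_pwDl ?expw_gt0 // sumr_ge0 // => y _.
exact/ltW/expw_gt0.
Qed.

Lemma is_derive_expw x (t : R) : is_derive t 1 (expw x) (b x * expw x t).
Proof. by apply: is_derive_eq; rewrite add0r mul1r scaler0 add0r scaler1 mulrC. Qed.

Lemma is_derive_partition_fn (t : R) : is_derive t 1 partition_fn (moment1 t).
Proof. by apply: is_derive_sumr => x; exact: is_derive_expw. Qed.

Lemma is_derive_moment1 (t : R) : is_derive t 1 moment1 (moment2 t).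
Proof.
apply: is_derive_sumr => x.
by rewrite expr2 -mulrA; apply: is_deriveZ; exact: is_derive_expw.
Qed.

Lemma tilt_gt0 t x : 0 < tilt t x.
Proof. exact: divr_gt0 (expw_gt0 x t) (partition_fn_gt0 t). Qed.

Lemma variance_tilt t : Defs.variance (tilt t) b =
  (moment2 t * partition_fn t - moment1 t ^+ 2) / partition_fn t ^+ 2.
Proof.
have Z_neq0 := lt0r_neq0 (partition_fn_gt0 t).
rewrite /Defs.variance.
have -> : \sum_x tilt t x * b x = mean t.
  by rewrite /mean /moment1 mulr_suml; apply: eq_bigr => x _; rewrite /tilt; ring.
transitivity (\sum_x ((partition_fn t)^-1 * (b x ^+ 2 * expw x t)
    - (2 * mean t / partition_fn t) * (b x * expw x t)
    + (mean t ^+ 2 / partition_fn t) * expw x t)).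
  by apply: eq_bigr => x _; rewrite /tilt; ring.
rewrite big_split sumrB /= -!mulr_sumr -/(moment2 t) -/(moment1 t) -/(partition_fn t).
by rewrite /mean; field.
Qed.

Lemma is_derive_mean (t : R) : is_derive t 1 mean (Defs.variance (tilt t) b).
Proof.
have Z_neq0 := lt0r_neq0 (partition_fn_gt0 t).
have dZV := is_deriveV Z_neq0 (is_derive_partition_fn t).
apply: is_derive_eq (is_deriveM (is_derive_moment1 t) dZV) _.
by rewrite variance_tilt /GRing.scale /=; field.
Qed.

Lemma mean_continuous : continuous mean.
Proof.
move=> t; apply/differentiable_continuous/derivable1_diffP.
by case: (is_derive_mean t).
Qed.

Lemma mean_ndecr : {homo mean : s t / s <= t}.
Proof.
move=> s t st; apply: (@ger0_derive1_ndecr _ _ s t) => //.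
- by move=> z _; case: (is_derive_mean z).
- move=> z _; rewrite derive1E; case: (is_derive_mean z) => _ ->.
  by apply: variance_ge0 => x; exact/ltW/tilt_gt0.
- exact/continuous_subspaceT/mean_continuous.
Qed.

Lemma mean_incr x y : b x != b y -> {homo mean : s t / s < t}.
Proof.
move=> bxy s t st; apply: (@gtr0_derive1_lt_cc _ _ s t) => //.
- by move=> z _; case: (is_derive_mean z).
- move=> z _; rewrite derive1E; case: (is_derive_mean z) => _ ->.
  exact: variance_gt0 _ _ _ _ (tilt_gt0 z) bxy.
- exact/continuous_subspaceT/mean_continuous.
- by rewrite in_itv /= lexx ltW.
- by rewrite in_itv /= lexx ltW.
Qed.

Lemma variance_ratio_tilt c t : partition_fn c = 1 ->
  Defs.variance (expw^~ c) (fun x => tilt t x / expw x c) = chi2 c t.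
Proof.
move=> Zc1; have Z_neq0 := lt0r_neq0 (partition_fn_gt0 t).
rewrite /Defs.variance.
have -> : \sum_y expw y c * (tilt t y / expw y c) = 1.
  rewrite -(divff Z_neq0) {1}/partition_fn mulr_suml; apply: eq_bigr => y _.
  by rewrite /tilt; field; rewrite Z_neq0 expw_neq0.
have expw_double x : expw x (2 * t - c) = expw x t ^+ 2 / expw x c.
  by rewrite /expw -expRM_natr -expRN -expRD; congr expR; ring.
transitivity (\sum_x ((partition_fn t ^+ 2)^-1 * expw x (2 * t - c)
    - (2 / partition_fn t) * expw x t + expw x c)).
  apply: eq_bigr => x _; rewrite expw_double /tilt.
  by field; rewrite Z_neq0 expw_neq0.
rewrite big_split sumrB /= -!mulr_sumr -!/(partition_fn _) Zc1 /chi2.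
by field.
Qed.

Lemma is_derive_chi2 (c t : R) : is_derive t 1 (chi2 c)
  (2 * (partition_fn (2 * t - c) / partition_fn t ^+ 2) * (mean (2 * t - c) - mean t)).
Proof.
have Z_neq0 := lt0r_neq0 (partition_fn_gt0 t).
have Z2_neq0 := lt0r_neq0 (partition_fn_gt0 (2 * t - c)).
have d_affine : is_derive t 1 (fun s : R => 2 * s - c) 2.
  by apply: is_derive_eq; rewrite subr0 scaler1.
have dZ2 := is_derive1_comp (f := partition_fn) (g := fun s => 2 * s - c)
  (is_derive_partition_fn (2 * t - c)) d_affine.
have dV := is_deriveV (f := partition_fn ^+ 2) (expf_neq0 2 Z_neq0)
  (is_deriveX 2 (is_derive_partition_fn t)).
(* a shape on which the is_derive instances fire *)
have -> : chi2 c = (partition_fn \o (fun s => 2 * s - c)) *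
    (fun s => ((partition_fn ^+ 2) s)^-1) - cst 1.
  by apply/funext => s.
apply: is_derive_eq.
rewrite /GRing.scale /= -[(partition_fn ^+ 2) t]/(partition_fn t ^+ 2) subr0 /mean.
by field; apply/andP.
Qed.

Lemma chi2_slope_ge0 (c t : R) :
  0 <= 2 * (partition_fn (2 * t - c) / partition_fn t ^+ 2).
Proof. by rewrite mulr_ge0 ?divr_ge0 ?exprn_ge0 // ltW ?partition_fn_gt0. Qed.

Lemma is_derive_chi2_ge0 {c t : R} : c <= t ->
  exists2 d, is_derive t 1 (chi2 c) d & 0 <= d.
Proof.
move=> ct; eexists; first exact: is_derive_chi2.
by rewrite mulr_ge0 ?chi2_slope_ge0 // subr_ge0 mean_ndecr //; lra.
Qed.

Lemma is_derive_chi2_le0 {c t : R} : t <= c ->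
  exists2 d, is_derive t 1 (chi2 c) d & d <= 0.
Proof.
move=> tc; eexists; first exact: is_derive_chi2.
by rewrite mulr_ge0_le0 ?chi2_slope_ge0 // subr_le0 mean_ndecr //; lra.
Qed.

End ExponentialFamily.

Section TiltedFamily.
Context {R : realType} {T : finType} (P0 P1 : T -> R).
Hypotheses (P0_gt0 : forall x, 0 < P0 x) (P1_gt0 : forall x, 0 < P1 x).
Hypotheses (P0_sum1 : \sum_x P0 x = 1) (P1_sum1 : \sum_x P1 x = 1).

Definition llr (x : T) : R := ln (P1 x) - ln (P0 x).

Local Notation lnP0 := (fun x => ln (P0 x)).
Local Notation expw := (expw lnP0 llr).
Local Notation Z := (partition_fn lnP0 llr).
Local Notation mean := (mean lnP0 llr).
Local Notation gamma_range := [set y : R | - KL P0 P1 <= y <= KL P1 P0].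

Let T_inhabited : (0 < #|T|)%N := card_gt0_of_sum1 P0_sum1.

Lemma expw_at0 x : expw x 0 = P0 x.
Proof. by rewrite /expw mul0r addr0 lnK // posrE. Qed.

Lemma expw_at1 x : expw x 1 = P1 x.
Proof. by rewrite /expw mul1r /llr addrC subrK lnK // posrE. Qed.

Lemma partition_fn_at0 : Z 0 = 1.
Proof. by rewrite -P0_sum1; apply: eq_bigr => x _; rewrite expw_at0. Qed.

Lemma partition_fn_at1 : Z 1 = 1.
Proof. by rewrite -[RHS]P1_sum1; apply: eq_bigr => x _; rewrite expw_at1. Qed.

Lemma powR_expw x t : P0 x `^ (1 - t) * P1 x `^ t = expw x t.
Proof. by rewrite /powR !gt_eqF // -expRD /expw /llr; congr expR; ring. Qed.

Lemma tiltedE t : tilted P0 P1 t = tilt lnP0 llr t.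
Proof.
apply/funext => x; rewrite /tilted /tilt powR_expw; congr (_ / _).
by apply: eq_bigr => y _; rewrite powR_expw.
Qed.

Lemma KL_tilted_diff t :
  KL (tilted P0 P1 t) P0 - KL (tilted P0 P1 t) P1 = mean t.
Proof.
rewrite /KL tiltedE -sumrB /mean /moment1 mulr_suml; apply: eq_bigr => x _.
have tilt_pos : 0 < tilt lnP0 llr t x by exact: tilt_gt0.
rewrite !ln_div ?posrE ?expw_gt0 ?partition_fn_gt0 // /llr /tilt; ring.
Qed.

Lemma mean_at0 : mean 0 = - KL P0 P1.
Proof.
rewrite -KL_tilted_diff (_ : tilted P0 P1 0 = P0) ?KL_self ?sub0r //.
by rewrite tiltedE; apply/funext => x; rewrite /tilt partition_fn_at0 divr1 expw_at0.
Qed.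

Lemma mean_at1 : mean 1 = KL P1 P0.
Proof.
rewrite -KL_tilted_diff (_ : tilted P0 P1 1 = P1) ?KL_self ?subr0 //.
by rewrite tiltedE; apply/funext => x; rewrite /tilt partition_fn_at1 divr1 expw_at1.
Qed.

Lemma lambda_ofP y : gamma_range y ->
  0 <= lambda_of P0 P1 y <= 1 /\ mean (lambda_of P0 P1 y) = y.
Proof.
move=> y_in; rewrite -KL_tilted_diff /lambda_of; set S := (X in xget 0 X).
suff : S (xget 0 S) by []; apply: xgetPex.
have mean01 : mean 0 <= mean 1 by exact: mean_ndecr.
have y_between : Num.min (mean 0) (mean 1) <= y <= Num.max (mean 0) (mean 1).
  by rewrite (min_idPl mean01) (max_idPr mean01) mean_at0 mean_at1.
have mean_cont : {within `[0, 1], continuous mean}.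
  exact/continuous_subspaceT/mean_continuous.
have [l l_in mean_l] := IVT ler01 mean_cont y_between.
by exists l; rewrite in_itv /= in l_in; rewrite /S /= KL_tilted_diff.
Qed.

Lemma theta_chi2 alpha (i : bool) :
  theta alpha P0 P1 i = (2 / alpha) \*: chi2 lnP0 llr i%:R \o lambda_of P0 P1.
Proof.
apply/funext => y; rewrite /theta tiltedE; congr (_ * _).
case: i => /=.
  rewrite -(variance_ratio_tilt _ _ T_inhabited _ _ partition_fn_at1).
  by congr Defs.variance; apply/funext => x; rewrite expw_at1.
rewrite -(variance_ratio_tilt _ _ T_inhabited _ _ partition_fn_at0).
by congr Defs.variance; apply/funext => x; rewrite expw_at0.
Qed.

Lemma llr_const_eq : (forall x y, llr x = llr y) -> P1 = P0.
Proof.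
move=> llr_const; have [x0 _] := card_gt0P T_inhabited.
have P1E x : P1 x = P0 x * expR (llr x0).
  by rewrite -(llr_const x) /llr expRB !lnK ?posrE // mulrC divfK ?gt_eqF.
have exp_llr : expR (llr x0) = 1.
  by rewrite -P1_sum1 (eq_bigr _ (fun x _ => P1E x)) -mulr_suml P0_sum1 mul1r.
by apply/funext => x; rewrite P1E exp_llr mulr1.
Qed.

Lemma deriv_within_theta (i : bool) {alpha g d : R} : 0 < alpha -> P1 <> P0 ->
  gamma_range g -> is_derive (lambda_of P0 P1 g) 1 (chi2 lnP0 llr i%:R) d ->
  exists2 s, 0 < s & deriv_within (theta alpha P0 P1 i) gamma_range g (s * d).
Proof.
move=> alpha_gt0 P10 g_in chi2_der.
have [x [y llr_xy]] : exists x y, llr x != llr y.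
  apply: contrapT => llr_const; apply: P10; apply: llr_const_eq => x y.
  by apply: contrapT => llr_xy; apply: llr_const; exists x, y; exact/eqP.
set v := Defs.variance (tilt lnP0 llr (lambda_of P0 P1 g)) llr.
have v_gt0 : 0 < v by exact: variance_gt0 _ _ _ _ (tilt_gt0 _ _ T_inhabited _) llr_xy.
exists (2 / alpha / v); first by rewrite !divr_gt0.
have mean_lambda z : gamma_range z -> mean (lambda_of P0 P1 z) = z.
  by move=> /lambda_ofP[].
rewrite theta_chi2 mulrAC.
exact: (deriv_within_comp_inverse (mean_incr _ _ T_inhabited _ _ llr_xy) mean_lambda g_in
  (is_deriveZ (2 / alpha) chi2_der) (is_derive_mean _ _ T_inhabited _) (lt0r_neq0 v_gt0)).
Qed.

Lemma theta0_deriv_ge0 alpha g : 0 < alpha -> P1 <> P0 -> gamma_range g ->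
  exists d, deriv_within (theta alpha P0 P1 false) gamma_range g d /\ 0 <= d.
Proof.
move=> alpha_gt0 P10 g_in; have [/andP[lam_ge0 _] _] := lambda_ofP _ g_in.
have [d chi2_der d_ge0] := is_derive_chi2_ge0 lnP0 llr T_inhabited lam_ge0.
have [s s_gt0 theta_der] := deriv_within_theta false alpha_gt0 P10 g_in chi2_der.
by exists (s * d); rewrite mulr_ge0 // ltW.
Qed.

Lemma theta1_deriv_le0 alpha g : 0 < alpha -> P1 <> P0 -> gamma_range g ->
  exists d, deriv_within (theta alpha P0 P1 true) gamma_range g d /\ d <= 0.
Proof.
move=> alpha_gt0 P10 g_in; have [/andP[_ lam_le1] _] := lambda_ofP _ g_in.
have [d chi2_der d_le0] := is_derive_chi2_le0 lnP0 llr T_inhabited lam_le1.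
have [s s_gt0 theta_der] := deriv_within_theta true alpha_gt0 P10 g_in chi2_der.
by exists (s * d); rewrite mulr_ge0_le0 // ltW.
Qed.

End TiltedFamily.

Theorem proposition1 (R : realType) (T : finType) (alpha : R)
    (P0 P1 : T -> R) (g : R) :
  0 < alpha -> is_fulldist P0 -> is_fulldist P1 ->
  - KL P0 P1 <= g <= KL P1 P0 ->
  (exists d, deriv_within (theta alpha P0 P1 false)
               [set y | - KL P0 P1 <= y <= KL P1 P0] g d /\ 0 <= d) /\
  (exists d, deriv_within (theta alpha P0 P1 true)
               [set y | - KL P0 P1 <= y <= KL P1 P0] g d /\ d <= 0).
Proof.
move=> alpha_gt0 [P0_gt0 P0_sum1] [P1_gt0 P1_sum1] g_in.
have [P10|P10] := pselect (P1 = P0); last first.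
  by split; [apply: theta0_deriv_ge0 | apply: theta1_deriv_le0].
have isolated f : deriv_within f [set y | - KL P0 P1 <= y <= KL P1 P0] g 0.
  apply: deriv_within_isolated => h /=; move: g_in.
  by rewrite P10 KL_self // oppr0 => /andP[? ?] /andP[? ?]; lra.
by split; exists 0; split.
Qed.
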